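(* Let $k,m\ge 1$, let $q\in\mathbb{R}^k$ (the source position) and let $p_1,\dots,p_m\in\mathbb{R}^k$ (the sensor positions) with $p_i\neq q$ for all $i$; write $\mathbf{p}=[p_1^\top,\dots,p_m^\top]^\top$, $r_i=\|p_i-q\|$ and $\hat r_i=(p_i-q)/\|p_i-q\|$. For each $i$ let $g_i:(0,\infty)\to\mathbb{R}$ be continuously differentiable and let $h_i(p_i,q)=g_i(\|p_i-q\|)$. Assume: (i) for each $i$, $|g_i'(r)|$ is monotonically decreasing in $r$; (ii) $\sum_{i=1}^m \hat r_i\hat r_i^\top\succ 0$. Let $H(\mathbf{p},q)=(h_1(p_1,q),\dots,h_m(p_m,q))^\top$, let $\nabla_q H(\mathbf{p},q)$ be the $k\times m$ matrix whose $i$-th column is $\nabla_q h_i(p_i,q)$, and suppose the $k\times k$ matrix $\nabla_q H(\mathbf{p},q)\nabla_q H(\mathbf{p},q)^\top$ is invertible, so that $$L(\mathbf{p},q)=\operatorname{Tr}\Big[\big(\nabla_q H(\mathbf{p},q)\,\nabla_q H(\mathbf{p},q)^\top\big)^{-1}\Big]$$ is defined. Then $$\frac{1}{m\,L(\mathbf{p},q)}\le \max_{1\le i\le m}|g_i'(r_i)|^2 .$$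
   Context: Here $\|\cdot\|$ is the Euclidean norm, $\succ 0$ means positive definite, and $\nabla_q h_i$ denotes the gradient of $h_i$ with respect to $q$. The matrix $\nabla_q H\nabla_q H^\top$ plays the role of the (unnormalized) Fisher information matrix of the measurements $y_i=h_i(p_i,q)+\nu_i$ with i.i.d. Gaussian noise. *)

From HB Require Import structures.
From mathcomp Require Import all_boot all_order all_algebra.
From mathcomp Require Import all_classical all_reals all_analysis.
Set Implicit Arguments. Unset Strict Implicit. Unset Printing Implicit Defensive.
Import Order.TTheory GRing.Theory Num.Theory.
Import numFieldNormedType.Exports.
Local Open Scope ring_scope.

(* Euclidean norm of a row vector (the library norm on matrices is the sup norm). *)
Definition enorm (R : realType) (k : nat) (v : 'rV[R]_k) : R :=
  Num.sqrt (\sum_(j < k) v 0 j ^+ 2).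

Definition unitdir (R : realType) (k : nat) (pi q : 'rV[R]_k) : 'rV[R]_k :=
  (enorm (pi - q))^-1 *: (pi - q).

Definition posdef (R : realType) (k : nat) (M : 'M[R]_k) : Prop :=
  M^T = M /\ forall v : 'rV[R]_k, v != 0 -> 0 < (v *m M *m v^T) 0 0.

Definition grad (R : realType) (k : nat) (f : 'rV[R]_k -> R) (q : 'rV[R]_k)
  : 'rV[R]_k := \row_(j < k) ('D_(delta_mx 0 j) f q).

Definition hfun (R : realType) (k : nat) (g : R -> R) (pi q : 'rV[R]_k) : R :=
  g (enorm (pi - q)).

Definition gradH (R : realType) (k m : nat) (g : 'I_m -> R -> R)
  (p : 'I_m -> 'rV[R]_k) (q : 'rV[R]_k) : 'M[R]_(k, m) :=
  \matrix_(j < k, i < m) (grad (fun x => hfun (g i) (p i) x) q) 0 j.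

Definition Lcrb (R : realType) (k m : nat) (g : 'I_m -> R -> R)
  (p : 'I_m -> 'rV[R]_k) (q : 'rV[R]_k) : R :=
  \tr (invmx (gradH g p q *m (gradH g p q)^T)).

(** With [G = \nabla_q H] and [M = G G^T], the [i]-th column of [G] is
    [-g_i'(r_i) \hat r_i], so [tr M = \sum_i g_i'(r_i)^2 <= m max_i g_i'(r_i)^2].
    If [N] is the inverse of the Gram matrix [M], then [N = (N G)(N G)^T] and the
    [j]-th rows of [N G] and [G] have inner product [(N M)_jj = 1], so
    Cauchy-Schwarz gives [N_jj M_jj >= 1], hence [tr M tr N >= 1].  Together,
    [1 <= m max_i g_i'(r_i)^2 tr N]. *)
From HB Require Import structures.
From mathcomp Require Import all_boot all_order all_algebra.
From mathcomp Require Import all_classical all_reals all_analysis.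
From mathcomp Require Import ring lra.
Import Order.TTheory GRing.Theory Num.Theory.
Import numFieldNormedType.Exports.
Local Open Scope ring_scope.

Set Implicit Arguments.
Unset Strict Implicit.
Unset Printing Implicit Defensive.

Section GramMatrix.
Variable R : realFieldType.

Lemma sumr_sqr_Lagrange (n : nat) (a b : 'I_n -> R) :
  \sum_i \sum_j (a i * b j - a j * b i) ^+ 2
  = 2 * ((\sum_i a i ^+ 2) * (\sum_i b i ^+ 2) - (\sum_i a i * b i) ^+ 2).
Proof.
set A := \sum_i a i ^+ 2; set B := \sum_i b i ^+ 2; set S := \sum_i a i * b i.
have expand i : \sum_j (a i * b j - a j * b i) ^+ 2
    = a i ^+ 2 * B + A * b i ^+ 2 - 2 * (a i * b i) * S.
  rewrite /A /B /S mulr_sumr mulr_suml mulr_sumr -big_split -sumrB /=.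
  by apply: eq_bigr => j _; ring.
rewrite (eq_bigr _ (fun i _ => expand i)) sumrB big_split /=.
by rewrite -!mulr_suml -!mulr_sumr -/A -/B -/S; ring.
Qed.

Lemma sumr_Cauchy_Schwarz (n : nat) (a b : 'I_n -> R) :
  (\sum_i a i * b i) ^+ 2 <= (\sum_i a i ^+ 2) * (\sum_i b i ^+ 2).
Proof.
have : 0 <= \sum_i \sum_j (a i * b j - a j * b i) ^+ 2.
  by do 2!apply: sumr_ge0 => ? _; exact: sqr_ge0.
by rewrite sumr_sqr_Lagrange pmulr_rge0 // subr_ge0.
Qed.

Lemma mxtrace_ge_diag (n : nat) (A : 'M[R]_n) (j : 'I_n) :
  (forall i, 0 <= A i i) -> A j j <= \tr A.
Proof. by move=> A_ge0; rewrite /mxtrace (bigD1 j) //= lerDl sumr_ge0. Qed.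

Variables k m : nat.
Implicit Type G : 'M[R]_(k, m).

Lemma gram_diagE G j : (G *m G^T) j j = \sum_i G j i ^+ 2.
Proof. by rewrite mxE; apply: eq_bigr => i _; rewrite mxE expr2. Qed.

Lemma gram_diag_ge0 G j : 0 <= (G *m G^T) j j.
Proof. by rewrite gram_diagE sumr_ge0 // => i _; exact: sqr_ge0. Qed.

Lemma mxtrace_gram G : \tr (G *m G^T) = \sum_i \sum_j G j i ^+ 2.
Proof. by rewrite exchange_big; apply: eq_bigr => j _; rewrite gram_diagE. Qed.

Section InvertibleGram.
Variable G : 'M[R]_(k, m).
Hypothesis G_unit : G *m G^T \in unitmx.
Let M := G *m G^T.
Let N := invmx M.

Lemma invmx_gram : N = (N *m G) *m (N *m G)^T.
Proof.
have NT : N^T = N by rewrite /N trmx_inv trmx_mul trmxK.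
by rewrite trmx_mul NT !mulmxA -(mulmxA N) -/M /N mulVmx // mul1mx.
Qed.

Lemma invmx_gram_diag_ge0 j : 0 <= N j j.
Proof. by rewrite invmx_gram gram_diag_ge0. Qed.

Lemma invmx_gram_diag_mul_ge1 j : 1 <= N j j * M j j.
Proof.
have dot1 : \sum_i (N *m G) j i * G j i = 1.
  transitivity (((N *m G) *m G^T) j j).
    by rewrite mxE; apply: eq_bigr => i _; rewrite [G^T _ _]mxE.
  by rewrite -mulmxA /N mulVmx // mxE eqxx.
rewrite invmx_gram /M !gram_diagE -[1](expr1n _ 2) -dot1.
exact: sumr_Cauchy_Schwarz.
Qed.

Lemma mxtrace_gram_mul_invmx_ge1 : (0 < k)%N -> 1 <= \tr M * \tr N.
Proof.
move=> k_gt0; pose j := Ordinal k_gt0.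
apply: le_trans (invmx_gram_diag_mul_ge1 j) _.
rewrite [X in X <= _]mulrC; apply: ler_pM.
- exact: gram_diag_ge0.
- exact: invmx_gram_diag_ge0.
- by apply: mxtrace_ge_diag => i; exact: gram_diag_ge0.
- by apply: mxtrace_ge_diag => i; exact: invmx_gram_diag_ge0.
Qed.

End InvertibleGram.
End GramMatrix.

Section EuclideanNorm.
Variables (R : realType) (k : nat).
Implicit Types (v : 'rV[R]_k) (j : 'I_k).

Lemma enorm_ge0 v : 0 <= enorm v.
Proof. exact: sqrtr_ge0. Qed.

Lemma sqr_enorm v : enorm v ^+ 2 = \sum_j v 0 j ^+ 2.
Proof. by rewrite sqr_sqrtr // sumr_ge0 // => j _; exact: sqr_ge0. Qed.

Lemma enorm_gt0 v : v != 0 -> 0 < enorm v.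
Proof.
move=> v_neq0; rewrite lt_def enorm_ge0 andbT -sqrf_eq0 sqr_enorm psumr_eq0 /=;
  last by move=> j _; exact: sqr_ge0.
apply: contra v_neq0 => /allP v0; apply/eqP/rowP => j.
by rewrite mxE; apply/eqP; rewrite -sqrf_eq0; exact: v0 (mem_index_enum j).
Qed.

Lemma sqr_enormZ (a : R) v : enorm (a *: v) ^+ 2 = a ^+ 2 * enorm v ^+ 2.
Proof.
by rewrite !sqr_enorm mulr_sumr; apply: eq_bigr => j _; rewrite mxE exprMn.
Qed.

Lemma sqr_enorm_subZdelta v j (t : R) :
  enorm (v - t *: delta_mx 0 j) ^+ 2 = enorm v ^+ 2 - 2 * v 0 j * t + t ^+ 2.
Proof.
rewrite !sqr_enorm (bigD1 j) //= [in RHS](bigD1 j) //= !mxE !eqxx mulr1.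
rewrite (eq_bigr (fun l => v 0 l ^+ 2)); first by ring.
by move=> l /negbTE l_neq_j; rewrite !mxE l_neq_j mulr0 subr0.
Qed.

End EuclideanNorm.

Section GradientOfRadialFunction.
Variable R : realType.

Lemma derive_along_line (k : nat) (F : 'rV[R]_k -> R) (x v : 'rV[R]_k) :
  'D_v F x = 'D_1 (fun t : R => F (t *: v + x)) 0.
Proof.
rewrite /derive /= scale0r add0r; do 2 f_equal; apply/funext => h.
by rewrite addr0 [h%:A]mulr1.
Qed.

Lemma is_derive_radial_line (g : R -> R) (r a : R) : 0 < r -> derivable g r 1 ->
  is_derive (0 : R) 1 (fun t => g (Num.sqrt (r ^+ 2 - 2 * a * t + t ^+ 2)))
    ('D_1 g r * (- a / r)).
Proof.
move=> r_gt0 dg; pose Q t := r ^+ 2 - 2 * a * t + t ^+ 2.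
have Q0 : Q 0 = r ^+ 2 by rewrite /Q; ring.
have sqrtQ0 : Num.sqrt (Q 0) = r by rewrite Q0 sqrtr_sqr ger0_norm ?ltW.
have dQ : is_derive (0 : R) 1 Q (- (2 * a)).
  by apply: is_derive_eq; rewrite !(scaler1, scale0r) /=; ring.
have dsqrt : is_derive (Q 0) 1 Num.sqrt (2 * r)^-1.
  by rewrite -[in X in is_derive _ _ _ X]sqrtQ0; apply: is_derive1_sqrt; rewrite Q0 exprn_gt0.
have dg' : is_derive (Num.sqrt (Q 0)) 1 g ('D_1 g r) by rewrite sqrtQ0; exact: derivableP.
have -> : 'D_1 g r * (- a / r) = 'D_1 g r * ((2 * r)^-1 * - (2 * a)).
  by field; rewrite gt_eqF.
exact: (is_derive1_comp (f := g) (g := Num.sqrt \o Q) dg' (is_derive1_comp dsqrt dQ)).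
Qed.

Variables (k : nat) (g : R -> R) (p q : 'rV[R]_k).
Hypotheses (p_neq_q : p != q) (dg : derivable g (enorm (p - q)) 1).

Lemma grad_hfun :
  grad (hfun g p) q = - (derive1 g (enorm (p - q)) / enorm (p - q)) *: (p - q).
Proof.
have r_gt0 : 0 < enorm (p - q) by rewrite enorm_gt0 // subr_eq0.
apply/rowP => j; rewrite [LHS]mxE [RHS]mxE derive_along_line derive1E.
rewrite mulNr -mulrN mulrAC -mulrA.
rewrite -(derive_val (is_derive := is_derive_radial_line ((p - q) 0 j) r_gt0 dg)).
f_equal; apply/funext => t; rewrite /hfun -sqr_enorm_subZdelta.
by rewrite sqrtr_sqr ger0_norm ?enorm_ge0 // opprD addrA addrAC.
Qed.

Lemma sqr_enorm_grad_hfun :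
  enorm (grad (hfun g p) q) ^+ 2 = derive1 g (enorm (p - q)) ^+ 2.
Proof.
have r_neq0 : enorm (p - q) != 0 by rewrite gt_eqF // enorm_gt0 // subr_eq0.
by rewrite grad_hfun sqr_enormZ sqrrN expr_div_n divfK // sqrf_eq0.
Qed.

End GradientOfRadialFunction.

Lemma sumr_le_bigmax (R : realDomainType) (n : nat) (F : 'I_n -> R) :
  \sum_i F i <= n%:R * \big[Num.max/0]_i F i.
Proof.
rewrite mulr_natl -[n in _ *+ n]card_ord -sumr_const.
by apply: ler_sum => i _; exact: le_bigmax.
Qed.

Lemma mxtrace_gradH (R : realType) (k m : nat) (q : 'rV[R]_k)
    (p : 'I_m -> 'rV[R]_k) (g : 'I_m -> R -> R) :
  (forall i, p i != q) -> (forall i, derivable (g i) (enorm (p i - q)) 1) ->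
  \tr (gradH g p q *m (gradH g p q)^T)
  = \sum_i derive1 (g i) (enorm (p i - q)) ^+ 2.
Proof.
move=> p_neq_q dg; rewrite mxtrace_gram; apply: eq_bigr => i _.
rewrite -sqr_enorm_grad_hfun // sqr_enorm.
by apply: eq_bigr => j _; rewrite mxE.
Qed.

Theorem proposition1 (R : realType) (k m : nat) (hk : (0 < k)%N) (hm : (0 < m)%N)
  (q : 'rV[R]_k) (p : 'I_m -> 'rV[R]_k) (g : 'I_m -> R -> R)
  (hpq : forall i, p i != q)
  (hgd : forall i r, 0 < r -> derivable (g i) r 1)
  (hgc : forall i r, 0 < r -> {for r, continuous (derive1 (g i))})
  (hmono : forall i r s, 0 < r -> r <= s -> `|derive1 (g i) s| <= `|derive1 (g i) r|)
  (hpd : posdef (\sum_(i < m) (unitdir (p i) q)^T *m unitdir (p i) q))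
  (hinv : gradH g p q *m (gradH g p q)^T \in unitmx) :
  1 / (m%:R * Lcrb g p q)
    <= \big[Num.max/0]_(i < m) (derive1 (g i) (enorm (p i - q))) ^+ 2.
Proof.
set L := Lcrb g p q; set mx := \big[Num.max/0]_i _.
set M := gradH g p q *m (gradH g p q)^T.
have trM_le : \tr M <= m%:R * mx.
  rewrite mxtrace_gradH //; last by move=> i; apply: hgd; rewrite enorm_gt0 // subr_eq0.
  exact: sumr_le_bigmax.
have trM_L_ge1 : 1 <= \tr M * L := mxtrace_gram_mul_invmx_ge1 hinv hk.
have trM_ge0 : 0 <= \tr M by rewrite mxtrace_gram; do 2!apply: sumr_ge0 => ? _; exact: sqr_ge0.
have L_gt0 : 0 < L.
  by rewrite ltNge; apply/negP => /(mulr_ge0_le0 trM_ge0); lra.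
rewrite ler_pdivrMr ?mulr_gt0 ?ltr0n // mulrA [mx * _]mulrC.
exact: le_trans trM_L_ge1 (ler_wpM2r (ltW L_gt0) trM_le).
Qed.
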